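(* Let $f\colon\mathbb Z^m\to\mathbb Q\cup\{\infty\}$ be SBO jump M-convex and let $r\in\mathbb Z^m$. Let $z^{(1)},\dots,z^{(\ell)}\in\mathbb Z^m$ with $z^{(k)}\equiv r\pmod2$ for all $k$. Let $\lambda^{(1)},\dots,\lambda^{(\ell)}\ge0$ be reals with $\sum_k\lambda^{(k)}=1$, and suppose $z:=\sum_k\lambda^{(k)}z^{(k)}$ is an integer vector with $z\equiv r\pmod2$. Then \[ f(z)\le\sum_{k\in[\ell]}\lambda^{(k)}f(z^{(k)}). \]
   Context: For $x,y\in\mathbb Z^m$, write $x\sqsubseteq y$ if $|x_i|\le|y_i|$ and $x_iy_i\ge0$ for all $i$. A $2$-step decomposition of $d\in\mathbb Z^m$ is a multiset $p^{(1)},\dots,p^{(\ell)}\in\mathbb Z^m$ with $\|p^{(k)}\|_1=2$ and $p^{(k)}\sqsubseteq d$ for all $k$, and $d=\sum_kp^{(k)}$. $f$ is SBO jump M-convex if the following holds for all $z^{(1)},z^{(2)}$ with finite $f$-values. There must exist a $2$-step decomposition $p^{(1)},\dots,p^{(\ell)}$ of $z^{(2)}-z^{(1)}$ and reals $g^{(1)},\dots,g^{(\ell)}$ such that: - $f(z^{(2)})=f(z^{(1)})+\sum_kg^{(k)}$; - $f(z^{(1)}+\sum_{k\in I}p^{(k)})\le f(z^{(1)})+\sum_{k\in I}g^{(k)}$ for all $I\subseteq[\ell]$. Congruence modulo $2$ is componentwise. *)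

From HB Require Import structures.
From mathcomp Require Import all_boot all_order all_algebra.
From mathcomp Require Import reals.
Set Implicit Arguments. Unset Strict Implicit. Unset Printing Implicit Defensive.
Import Order.TTheory GRing.Theory Num.Theory.
Local Open Scope ring_scope.

(* Points of Z^m are row vectors 'rV[int]_m; the i-th coordinate of x is x 0 i.
   A function f : Z^m -> Q ∪ {∞} is encoded as 'rV[int]_m -> option rat,
   None standing for +∞. *)
Notation zvec m := 'rV[int]_m.

Definition sqsub (m : nat) (x y : zvec m) : Prop :=
  forall i : 'I_m, `|x 0 i| <= `|y 0 i| /\ 0 <= x 0 i * y 0 i.

Definition l1norm (m : nat) (x : zvec m) : int := \sum_(i < m) `|x 0 i|.

Definition two_step_decomp (m : nat) (d : zvec m) (ps : seq (zvec m)) : Prop :=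
  (forall p, p \in ps -> l1norm p = 2 /\ sqsub p d) /\ \sum_(p <- ps) p = d.

Definition ext_le (R : realType) (v : option rat) (c : R) : Prop :=
  match v with Some a => ratr a <= c | None => False end.

(* A decomposition p^(1..l) together with reals g^(1..l)
   is given as a list of pairs (p^(k), g^(k)); subsets I ⊆ [l] correspond to
   masks (bitseq) selecting entries of this list. *)
Definition SBO_jump_M_convex (R : realType) (m : nat) (f : zvec m -> option rat) : Prop :=
  forall (z1 z2 : zvec m) (a1 a2 : rat), f z1 = Some a1 -> f z2 = Some a2 ->
  exists pg : seq (zvec m * R)%type,
    [/\ two_step_decomp (z2 - z1) (map fst pg),
        ratr a2 = ratr a1 + \sum_(q <- pg) q.2 &
        forall I : bitseq,
          ext_le (f (z1 + \sum_(q <- mask I pg) q.1))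
                 (ratr a1 + \sum_(q <- mask I pg) q.2)].

Definition cong2 (m : nat) (x y : zvec m) : Prop :=
  forall i : 'I_m, ((x 0 i)%R = (y 0 i)%R %[mod 2])%Z.

(* First the real weights are replaced by rational ones with smaller support
   and no larger right-hand side: the admissible weights are cut out by
   rational linear equations, and moving along a kernel direction of these
   equations shrinks the support until the solution is unique, hence rational.
   Clearing denominators, the claim becomes N f(z) <= sum_(y in s) f(y) for a
   multiset s of N points congruent to r with barycenter z.  If s is not
   constant, pick a, b in s with a_c < z_c < b_c.  As b - a is even, following
   odd coordinates through a 2-step decomposition of b - a yields a subfamily
   summing to an even P with P_c = 2, and the two subset inequalities of SBO
   jump M-convexity give f(a + P) + f(b - P) <= f(a) + f(b).  Replacing a, b by
   a + P, b - P keeps the barycenter and the parity class, does not increase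
   the total value and strictly decreases sum_(y in s) |y - z|_1, so the
   process ends with s constant equal to z. *)

From HB Require Import structures.
From mathcomp Require Import all_boot all_order all_algebra.
From mathcomp Require Import reals zify ring lra.
Set Implicit Arguments. Unset Strict Implicit. Unset Printing Implicit Defensive.
Import Order.TTheory GRing.Theory Num.Theory.
Local Open Scope ring_scope.

Lemma sumr_setC (I : finType) (V : zmodType) (S : {set I}) (F : I -> V) :
  \sum_(i in ~: S) F i = \sum_i F i - \sum_(i in S) F i.
Proof. by rewrite [\sum_i F i](bigID (mem S)) addrC addKr; apply: eq_bigl => i; rewrite inE. Qed.

Section TwoStepVector.

Variables (m : nat) (p : zvec m).
Hypothesis p_l1 : l1norm p = 2.

Lemma l1norm_bigD1 w : `|p 0 w| + \sum_(i < m | i != w) `|p 0 i| = 2.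
Proof. by rewrite -p_l1 /l1norm [RHS](bigD1 w). Qed.

Lemma two_step_coord_le2 w : `|p 0 w| <= 2.
Proof.
have off_w_ge0 : 0 <= \sum_(i < m | i != w) `|p 0 i| by exact: sumr_ge0.
by have := l1norm_bigD1 w; lia.
Qed.

Lemma two_step_coord2 w : `|p 0 w| = 2 -> forall y, y != w -> p 0 y = 0.
Proof.
move=> pw2 y yw; apply/normr0_eq0.
have rest0 : \sum_(i < m | i != w) `|p 0 i| = 0 by have := l1norm_bigD1 w; lia.
exact: (psumr_eq0P (fun i _ => normr_ge0 _) rest0).
Qed.

Lemma two_step_odd_coord w : ~~ (2 %| p 0%R w)%Z ->
  exists x, [/\ x != w, `|p 0 w| = 1, `|p 0 x| = 1 &
                forall y, y != w -> y != x -> p 0 y = 0].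
Proof.
move=> odd_w; have sum_w := l1norm_bigD1 w.
have off_w_ge0 : 0 <= \sum_(i < m | i != w) `|p 0 i| by exact: sumr_ge0.
have pw1 : `|p 0 w| = 1 by lia.
have [x /andP[xw px0]] : exists x, (x != w) && (p 0 x != 0).
  apply/existsP; apply: contraT; rewrite negb_exists => /forallP p0.
  suff : \sum_(i < m | i != w) `|p 0 i| = 0 by lia.
  by apply: big1 => i iw; move: (p0 i); rewrite iw negbK => /eqP ->.
rewrite (bigD1 x xw) /= in sum_w; set rest := \sum_(i | _) _ in sum_w.
have rest_ge0 : 0 <= rest by exact: sumr_ge0.
have px1 : `|p 0 x| = 1 by rewrite -normr_gt0 in px0; lia.
have rest0 : rest = 0 by lia.
exists x; split=> // y yw yx; apply/normr0_eq0.
by apply: (psumr_eq0P (fun i _ => normr_ge0 _) rest0); rewrite yw yx.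
Qed.

End TwoStepVector.

Lemma sqsub_ge0 m (p d : zvec m) c : sqsub p d -> 0 < d 0 c -> 0 <= p 0 c.
Proof. by move=> /(_ c) [_ pd_ge0] dc_gt0; nia. Qed.

Section Subsum.

Variables (m : nat) (I : finType) (v : I -> zvec m) (d : zvec m).
Hypotheses (v_sqsub : forall i, sqsub (v i) d) (sum_v : \sum_i v i = d).
Implicit Types S : {set I}.

Definition subsum S : zvec m := \sum_(i in S) v i.

Lemma subsum_setU1 j S : j \notin S -> subsum (j |: S) = v j + subsum S.
Proof. exact: big_setU1. Qed.

Lemma subsumC S : subsum (~: S) = d - subsum S.
Proof. by rewrite /subsum sumr_setC sum_v. Qed.

Lemma sqsub_subsum S : sqsub (subsum S) d.
Proof.
move=> x; have SC_x : subsum (~: S) 0 x = d 0 x - subsum S 0 x.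
  by rewrite subsumC !mxE.
have [d_ge0 | d_lt0] := lerP 0 (d 0 x).
  have v_ge0 i : 0 <= v i 0 x by have [] := v_sqsub i x; nia.
  have [S_ge0 SC_ge0] : 0 <= subsum S 0 x /\ 0 <= subsum (~: S) 0 x.
    by rewrite /subsum !summxE; split; apply: sumr_ge0.
  by split; nia.
have v_le0 i : v i 0 x <= 0 by have [] := v_sqsub i x; nia.
have [S_le0 SC_le0] : subsum S 0 x <= 0 /\ subsum (~: S) 0 x <= 0.
  by rewrite /subsum !summxE; split; apply: sumr_le0.
by split; nia.
Qed.

Section EvenSubsum.

Hypotheses (v_l1 : forall i, l1norm (v i) = 2) (d_even : forall x, (2 %| d 0%R x)%Z).
Variable c : 'I_m.
Hypothesis dc_gt0 : 0 < d 0 c.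

Lemma odd_subsum_outside S w : ~~ (2 %| subsum S 0%R w)%Z ->
  exists2 j, j \notin S & ~~ (2 %| v j 0%R w)%Z.
Proof.
move=> odd_S; apply/exists_inP; apply: contraT; rewrite negb_exists_in => /forall_inP even_out.
have even_out_sum : (2 %| \sum_(i | i \notin S) v i 0%R w)%Z.
  by apply: rpred_sum => i /even_out; rewrite negbK.
have split_w : subsum S 0 w + \sum_(i | i \notin S) v i 0 w = d 0 w.
  by rewrite /subsum -sum_v !summxE [RHS](bigID (mem S)).
by move: odd_S; rewrite -(rpredDr _ even_out_sum) split_w d_even.
Qed.

(* The odd coordinates of the current subsum are exactly [c] and [w]; adding
   a summand that is odd at [w] moves this loose end to its other odd
   coordinate, until that coordinate is [c] itself. *)
Lemma even_subsum_walk S w : w != c -> subsum S 0 c = 1 ->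
  (forall x, (2 %| subsum S 0%R x)%Z = (x != c) && (x != w)) ->
  exists S', (forall x, (2 %| subsum S' 0%R x)%Z) /\ subsum S' 0 c = 2.
Proof.
have [n] := ubnP #|~: S|; elim: n S w => // n IH S w ltSn wc Sc1 S_odd.
have [j jS odd_jw] : exists2 j, j \notin S & ~~ (2 %| v j 0%R w)%Z.
  by apply: odd_subsum_outside; rewrite S_odd eqxx andbF.
have [x [xw vjw1 vjx1 vj0]] := two_step_odd_coord (v_l1 j) odd_jw.
have vjc_ge0 := sqsub_ge0 (v_sqsub j) dc_gt0.
have Sw := S_odd w; rewrite eqxx andbF in Sw.
have jS_coord y : subsum (j |: S) 0 y = v j 0 y + subsum S 0 y.
  by rewrite subsum_setU1 // mxE.
have [xc | xc] := eqVneq x c.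
  subst x; exists (j |: S); split=> [y|]; last by rewrite jS_coord Sc1; lia.
  rewrite jS_coord; have [->|yw] := eqVneq y w; first by lia.
  have [->|yc] := eqVneq y c; first by rewrite Sc1; lia.
  by move: (S_odd y); rewrite yw yc vj0 // add0r => ->.
apply: (IH (j |: S) x) => //.
- by have := cardsC S; have := cardsC (j |: S); rewrite cardsU1 jS; lia.
- by rewrite jS_coord Sc1 vj0 ?add0r // eq_sym.
move=> y; rewrite jS_coord.
have [->|yw] := eqVneq y w; first by rewrite wc (eq_sym w x) xw /=; lia.
have [->|yx] := eqVneq y x; first by move: (S_odd x); rewrite xw xc /=; lia.
by rewrite vj0 // add0r S_odd yw.
Qed.

Lemma even_subsum_exists :
  exists S, (forall x, (2 %| subsum S 0%R x)%Z) /\ subsum S 0 c = 2.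
Proof.
have [j vjc] : exists j, v j 0 c != 0.
  apply/existsP; apply: contraTT dc_gt0; rewrite negb_exists => /forallP v0.
  rewrite -sum_v summxE big1 ?ltxx // => i _; exact/eqP/negPn/v0.
have vjc_ge0 := sqsub_ge0 (v_sqsub j) dc_gt0.
have vjc_le2 := two_step_coord_le2 (v_l1 j) c.
have j_coord y : subsum [set j] 0 y = v j 0 y by rewrite /subsum big_set1.
have [even_jc | odd_jc] := boolP (2 %| v j 0%R c)%Z.
  have vjc2 : v j 0 c = 2 by lia.
  have vj0 : forall y, y != c -> v j 0 y = 0.
    by apply: (two_step_coord2 (v_l1 j)); rewrite vjc2.
  exists [set j]; split=> [x|]; rewrite j_coord //.
  by have [->|xc] := eqVneq x c; [rewrite vjc2 | rewrite vj0].
have [w [wc vjc1 vjw1 vj0]] := two_step_odd_coord (v_l1 j) odd_jc.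
apply: (@even_subsum_walk [set j] w) => [||x]; rewrite ?j_coord //; first by lia.
have [->|xc] := eqVneq x c; first exact: negbTE.
have [->|xw] := eqVneq x w; first by rewrite andbF; lia.
by rewrite vj0.
Qed.

End EvenSubsum.

End Subsum.

Definition mask_of n (S : {set 'I_n}) : bitseq := [seq i \in S | i <- enum 'I_n].

Lemma big_mask_of (T : Type) (V : nmodType) (s : seq T) (S : {set 'I_(size s)})
    (F : T -> V) :
  \sum_(q <- mask (mask_of S) s) F q = \sum_(i in S) F (tnth (in_tuple s) i).
Proof.
rewrite big_mask; apply: eq_bigl => i /=.
by rewrite /mask_of (nth_map i) ?size_enum_ord // nth_ord_enum andbT.
Qed.

(* Apply the SBO inequality to the subfamily summing to [P] and to its
   complement, which sums to [b - a - P]. *)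
Lemma SBO_even_exchange (R : realType) m (f : zvec m -> option rat)
    (a b : zvec m) (al be : rat) (c : 'I_m) :
  SBO_jump_M_convex R f -> f a = Some al -> f b = Some be ->
  (forall x, (2 %| (b - a) 0%R x)%Z) -> 0 < (b - a) 0 c ->
  exists P al' be', [/\ sqsub P (b - a) /\ (forall x, (2 %| P 0%R x)%Z),
    P 0 c = 2, f (a + P) = Some al', f (b - P) = Some be' &
    ratr al' + ratr be' <= ratr al + ratr be :> R].
Proof.
move=> f_SBO fa fb ba_even bac_gt0.
have [pg [[pg_l1 sum_pg] fb_sum pg_sub]] := f_SBO a b al be fa fb.
pose v i := (tnth (in_tuple pg) i).1.
have v_two_step i : l1norm (v i) = 2 /\ sqsub (v i) (b - a).
  by apply: pg_l1; apply: map_f; apply: mem_tnth.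
have sum_v : \sum_i v i = b - a by rewrite -sum_pg big_map big_tnth.
have v_l1 i := (v_two_step i).1; have v_sqsub i := (v_two_step i).2.
have [S [S_even S_c]] := even_subsum_exists v_sqsub sum_v v_l1 ba_even bac_gt0.
have := pg_sub (mask_of S); have := pg_sub (mask_of (~: S)).
rewrite !big_mask_of -/(subsum v S) -/(subsum v (~: S)) (subsumC sum_v).
rewrite [a + (b - a - _)]addrA [a + (b - a)]addrC subrK.
case fbP: (f (b - _)) => [be'|] //= le_be'; case faP: (f (a + _)) => [al'|] //= le_al'.
exists (subsum v S), al', be'; split=> //.
  by split; [apply: (sqsub_subsum v_sqsub sum_v) | apply: S_even].
by move: fb_sum le_al' le_be'; rewrite [\sum_(q <- pg) _]big_tnth sumr_setC; lra.
Qed.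

Lemma row_neqP (T : eqType) n (u v : 'rV[T]_n) : u != v -> exists i, u 0 i != v 0 i.
Proof.
move=> uv; apply/existsP; apply: contraNT uv; rewrite negb_exists => /forallP uv.
by apply/eqP/rowP => i; apply/eqP/negPn/uv.
Qed.

Lemma ratr_solution_or_kernel (R : numFieldType) l p (M : 'M[rat]_(l, p))
    (x : 'rV[R]_l) (b : 'rV[rat]_p) :
  x *m map_mx ratr M = map_mx ratr b ->
  (exists D : 'rV[rat]_l, x = map_mx ratr D) \/
  (exists2 u : 'rV[R]_l, u != 0 & u *m map_mx ratr M = 0).
Proof.
move=> xM; have [M_free | M_nfree] := boolP (row_free M).
  left; have MR_free : row_free (map_mx (@ratr R) M) by rewrite /row_free mxrank_map.
  have : (map_mx (@ratr R) b <= map_mx ratr M)%MS by rewrite -xM submxMl.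
  rewrite map_submx => /submxP[D bD]; exists D.
  by apply: (row_free_inj MR_free); rewrite /= -map_mxM -bD xM.
right; have MR_nfree : ~~ row_free (map_mx (@ratr R) M) by rewrite /row_free mxrank_map.
exists (nz_row (kermx (map_mx (@ratr R) M))); first by rewrite nz_row_eq0 kermx_eq0.
by apply/eqP; rewrite -sub_kermx nz_row_sub.
Qed.

Definition barycentric (R : numDomainType) l m (zs : 'I_l -> zvec m) (z : zvec m)
    (lam : 'I_l -> R) : Prop :=
  [/\ forall k, 0 <= lam k, \sum_k lam k = 1 &
      forall i, (z 0 i)%:~R = \sum_k lam k * (zs k 0 i)%:~R].

Lemma barycentric_ratr (R : numFieldType) l m (zs : 'I_l -> zvec m) z (q : 'I_l -> rat) :
  barycentric zs z (fun k => ratr (q k) : R) -> barycentric zs z q.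
Proof.
case=> q_ge0 q_sum q_z; split=> [k|| i]; first by rewrite -(ler_rat R) rmorph0.
  by apply: (fmorph_inj (@ratr R)); rewrite rmorph_sum rmorph1.
apply: (fmorph_inj (@ratr R)); rewrite rmorph_int q_z rmorph_sum.
by apply: eq_bigr => k _; rewrite rmorphM rmorph_int.
Qed.

(* Move from [lam] along [w] until the first coordinate with [w k < 0] hits 0. *)
Lemma support_reduction (R : realFieldType) l (lam w : 'I_l -> R) :
  (forall k, 0 <= lam k) -> (forall k, lam k = 0 -> w k = 0) -> \sum_k w k = 0 ->
  (exists k, w k != 0) ->
  exists t : R, [/\ 0 <= t, forall k, 0 <= lam k + t * w k &
    (#|[set k | (lam k + t * w k != 0)%R]| < #|[set k | (lam k != 0)%R]|)%N].
Proof.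
move=> lam_ge0 w_supp w_sum [k0 wk0].
have [k1 wk1_lt0] : exists k, w k < 0.
  apply/existsP; apply: contraNT wk0; rewrite negb_exists => /forallP w_ge0.
  apply/eqP/(psumr_eq0P _ w_sum) => // k _; by rewrite leNgt.
case: (@arg_minP _ R _ k1 (fun k => w k < 0) (fun k => lam k / - w k) wk1_lt0).
move=> ks wks_lt0 ks_min; set t := lam ks / - w ks.
have wks_gt0 : 0 < - w ks by rewrite oppr_gt0.
have lamks0 : lam ks != 0 by apply: contraTneq wks_lt0 => /w_supp ->; rewrite ltxx.
have t_ge0 : 0 <= t by apply: divr_ge0 => //; apply: ltW.
exists t; split=> // [k|].
  have [wk_lt0 | wk_ge0] := ltrP (w k) 0; last by apply: addr_ge0 => //; apply: mulr_ge0.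
  have : t * - w k <= lam k by rewrite -ler_pdivlMr ?oppr_gt0 //; exact: ks_min.
  by rewrite mulrN; lra.
rewrite (cardsD1 ks [set k | lam k != 0]) inE lamks0 add1n ltnS.
apply: subset_leq_card; apply/subsetP => k; rewrite !inE.
have [->|k_ks] := eqVneq k ks; last first.
  by apply: contraNN => /eqP lamk0; rewrite lamk0 (w_supp _ lamk0) mulr0 addr0.
have -> : lam ks + t * w ks = 0 by rewrite /t; field; rewrite lt_eqF.
by rewrite eqxx.
Qed.

(* [lam *m weight_constraints zs Z = (1, z, 0)] says that [lam] is an affine
   combination of the [zs k] equal to [z] that vanishes on [Z]. *)
Definition weight_constraints l m (zs : 'I_l -> zvec m) (Z : pred 'I_l) :
    'M[rat]_(l, 1 + m + l) :=
  row_mx (row_mx (const_mx 1) (\matrix_(k, i) (zs k 0 i)%:~R))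
         (\matrix_(k, j) ((k == j) && Z k)%:R).

Lemma mul_weight_constraints (R : numFieldType) l m (zs : 'I_l -> zvec m)
    (Z : pred 'I_l) (u : 'rV[R]_l) :
  u *m map_mx ratr (weight_constraints zs Z) =
  row_mx (row_mx (const_mx (\sum_k u 0 k)) (\row_i \sum_k u 0 k * (zs k 0 i)%:~R))
         (\row_j ((Z j)%:R * u 0 j)).
Proof.
rewrite !map_row_mx !mul_mx_row; congr row_mx; first congr row_mx.
- by apply/rowP => j; rewrite !mxE; apply: eq_bigr => k _; rewrite !mxE rmorph1 mulr1.
- by apply/rowP => j; rewrite !mxE; apply: eq_bigr => k _; rewrite !mxE ratr_int.
apply/rowP => j; rewrite !mxE (bigD1 j) //= big1 => [|k kj].
  by rewrite !mxE eqxx /= ratr_nat addr0 mulrC.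
by rewrite !mxE (negPf kj) /= rmorph0 mulr0.
Qed.

Lemma barycentric_weight_constraints (R : numFieldType) l m (zs : 'I_l -> zvec m)
    (z : zvec m) (lam : 'I_l -> R) :
  barycentric zs z lam ->
  \row_k lam k *m map_mx ratr (weight_constraints zs (fun k => lam k == 0)) =
  map_mx ratr (row_mx (row_mx (const_mx 1) (\row_i (z 0 i)%:~R)) 0).
Proof.
case=> _ lam_sum lam_z.
rewrite mul_weight_constraints !map_row_mx map_const_mx rmorph1 map_mx0.
congr row_mx; first congr row_mx.
- by congr const_mx; rewrite -lam_sum; apply: eq_bigr => k _; rewrite mxE.
- by apply/rowP => i; rewrite !mxE ratr_int lam_z; apply: eq_bigr => k _; rewrite mxE.
- by apply/rowP => j; rewrite !mxE; case: eqP => [->|_]; rewrite ?mulr0 ?mul0r.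
Qed.

Lemma weight_constraints_kernel (R : numFieldType) l m (zs : 'I_l -> zvec m)
    (Z : pred 'I_l) (u : 'rV[R]_l) :
  u *m map_mx ratr (weight_constraints zs Z) = 0 ->
  [/\ \sum_k u 0 k = 0, forall i, \sum_k u 0 k * (zs k 0 i)%:~R = 0 &
      forall k, Z k -> u 0 k = 0].
Proof.
rewrite mul_weight_constraints => /eqP; rewrite !row_mx_eq0.
case/andP=> [/andP[/eqP/matrixP/(_ 0 0) u_sum /eqP/rowP u_z] /eqP/rowP u_Z].
split=> [|i|k Zk]; first by move: u_sum; rewrite !mxE.
  by move: (u_z i); rewrite !mxE.
by move: (u_Z k); rewrite !mxE Zk mul1r.
Qed.

Lemma rational_barycentric (R : realFieldType) l m (zs : 'I_l -> zvec m)
    (z : zvec m) (c : 'I_l -> rat) (lam : 'I_l -> R) :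
  barycentric zs z lam ->
  exists q : 'I_l -> rat, [/\ barycentric zs z q, forall k, lam k = 0 -> q k = 0 &
    \sum_k ratr (q k) * ratr (c k) <= \sum_k lam k * ratr (c k)].
Proof.
have [n] := ubnP #|[set k | (lam k != 0)%R]|.
elim: n lam => // n IH lam supp_lt [lam_ge0 lam_sum lam_z].
pose Z k := lam k == 0.
have lamM : \row_k lam k *m map_mx ratr (weight_constraints zs Z) =
    map_mx ratr (row_mx (row_mx (const_mx 1) (\row_i (z 0 i)%:~R)) 0).
  rewrite mul_weight_constraints !map_row_mx map_const_mx rmorph1 map_mx0.
  congr row_mx; first congr row_mx.
  - by congr const_mx; rewrite -lam_sum; apply: eq_bigr => k _; rewrite mxE.
  - by apply/rowP => i; rewrite !mxE ratr_int lam_z; apply: eq_bigr => k _; rewrite mxE.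
  - by apply/rowP => j; rewrite !mxE /Z; case: eqP => [->|_]; rewrite ?mulr0 ?mul0r.
have [[D lamD] | [u u_ne0 uM]] := ratr_solution_or_kernel lamM.
  have lam_ratr k : lam k = ratr (D 0 k).
    by have := congr1 (fun M : 'rV[R]_l => M 0 k) lamD; rewrite !mxE.
  exists (fun k => D 0 k); split.
  - apply: (barycentric_ratr (R := R)); split=> [k||i] /=; first by rewrite -lam_ratr.
      by rewrite -lam_sum; apply: eq_bigr => k _; rewrite lam_ratr.
    by rewrite lam_z; apply: eq_bigr => k _; rewrite lam_ratr.
  - by move=> k; rewrite lam_ratr => /eqP; rewrite fmorph_eq0 => /eqP.
  - by under [leRHS]eq_bigr do rewrite lam_ratr.
have [u_sum u_z u_Z] := weight_constraints_kernel uM.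
pose sg : R := if \sum_k u 0 k * ratr (c k) <= 0 then 1 else -1.
pose w k := sg * u 0 k.
have sg_ne0 : sg != 0 by rewrite /sg; case: ifP => _; rewrite ?oppr_eq0 oner_eq0.
have w_sum : \sum_k w k = 0 by rewrite -mulr_sumr u_sum mulr0.
have w_z i : \sum_k w k * (zs k 0 i)%:~R = 0.
  by under eq_bigr do rewrite -mulrA; rewrite -mulr_sumr u_z mulr0.
have w_c : \sum_k w k * ratr (c k) <= 0.
  under eq_bigr do rewrite -mulrA; rewrite -mulr_sumr /sg.
  by case: ifP => [|/negbT]; rewrite ?mul1r // mulN1r oppr_le0 -ltNge => /ltW.
have w_supp k : lam k = 0 -> w k = 0.
  by move=> lamk0; rewrite /w u_Z ?mulr0 //; apply/eqP.
have w_ne0 : exists k, w k != 0.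
  by have [k] := row_neqP u_ne0; rewrite mxE => uk; exists k; apply: mulf_neq0.
have [t [t_ge0 lam'_ge0 supp_lt']] := support_reduction lam_ge0 w_supp w_sum w_ne0.
have [||q [q_bary q_supp q_cost]] := IH (fun k => lam k + t * w k).
  exact: leq_trans supp_lt' supp_lt.
- split=> [k||i] //; first by rewrite big_split /= -mulr_sumr w_sum mulr0 addr0.
  under eq_bigr do rewrite mulrDl -mulrA.
  by rewrite big_split /= -mulr_sumr w_z mulr0 addr0 lam_z.
exists q; split=> // [k lamk0|]; first by apply: q_supp; rewrite lamk0 w_supp // mulr0 addr0.
apply: le_trans q_cost _; under eq_bigr do rewrite mulrDl -mulrA.
by rewrite big_split /= -mulr_sumr; have := mulr_ge0_le0 t_ge0 w_c; lra.
Qed.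

Lemma sumr_const_seq (T : Type) (V : nmodType) (s : seq T) (x : V) :
  \sum_(y <- s) x = x *+ size s.
Proof. by rewrite big_const_seq count_predT iter_addr_0. Qed.

Lemma has_lt_mean (T : eqType) (R : realDomainType) (s : seq T) (F : T -> R) z :
  \sum_(y <- s) F y = z *+ size s -> has (fun y => F y != z) s -> has (fun y => F y < z) s.
Proof.
move=> sum_s; apply: contraTT; rewrite -!all_predC => /allP ge_z; apply/allP => y ys /=.
have : \sum_(x <- s | x \in s) (F x - z) == 0.
  by rewrite -big_seq sumrB sum_s sumr_const_seq subrr.
rewrite psumr_eq0 => [/allP /(_ y ys)|x xs]; first by rewrite ys subr_eq0 negbK.
by rewrite subr_ge0 leNgt; exact: ge_z.
Qed.

Lemma has_gt_mean (T : eqType) (R : realDomainType) (s : seq T) (F : T -> R) z :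
  \sum_(y <- s) F y = z *+ size s -> has (fun y => F y != z) s -> has (fun y => z < F y) s.
Proof.
move=> sum_s ne_z; have /has_lt_mean : \sum_(y <- s) - F y = - z *+ size s.
  by rewrite sumrN sum_s mulNrn.
move=> lt_s; have /lt_s : has (fun y => - F y != - z) s.
  by apply: sub_has ne_z => y; rewrite eqr_opp.
by apply: sub_has => y; rewrite ltrN2.
Qed.

Lemma cong2P m (x y : zvec m) : cong2 x y <-> forall i, (2 %| x 0%R i - y 0%R i)%Z.
Proof. by split=> xy i; [rewrite -eqz_mod_dvd; apply/eqP | apply/eqP; rewrite eqz_mod_dvd]. Qed.

Lemma cong2_sub_even m (a b r : zvec m) :
  cong2 a r -> cong2 b r -> forall i, (2 %| (b - a) 0%R i)%Z.
Proof.
move=> /cong2P ar /cong2P br i; rewrite !mxE.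
have -> : b 0 i - a 0 i = (b 0 i - r 0 i) - (a 0 i - r 0 i).
  by rewrite opprB addrA subrK.
exact: rpredB.
Qed.

Lemma cong2_addr_even m (a P r : zvec m) : cong2 a r ->
  (forall i, (2 %| P 0%R i)%Z) -> cong2 (a + P) r /\ cong2 (a - P) r.
Proof.
by move=> /cong2P ar P_even; split; apply/cong2P => i; rewrite !mxE addrAC;
  [apply: rpredD | apply: rpredB].
Qed.

Lemma sum_coord m (s : seq (zvec m)) z (c : 'I_m) :
  \sum_(y <- s) y = z *+ size s -> \sum_(y <- s) y 0 c = z 0 c *+ size s.
Proof. by move=> sum_s; rewrite -mulmxnE -sum_s summxE. Qed.

Definition dispersion m (z : zvec m) (s : seq (zvec m)) : int :=
  \sum_(y <- s) l1norm (y - z).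

Lemma dispersion_ge0 m (z : zvec m) s : 0 <= dispersion z s.
Proof. by apply: sumr_ge0 => y _; apply: sumr_ge0. Qed.

Lemma norm_exchange_le (x y w p : int) : `|p| <= `|y - x| -> 0 <= p * (y - x) ->
  `|x + p - w| + `|y - p - w| <= `|x - w| + `|y - w|.
Proof. nia. Qed.

Lemma norm_exchange_lt (x y w : int) : x < w < y ->
  (2 %| w - x)%Z -> (2 %| y - w)%Z -> `|x + 2 - w| + `|y - 2 - w| < `|x - w| + `|y - w|.
Proof. lia. Qed.

Lemma l1norm_exchange m (z a b P : zvec m) c :
  sqsub P (b - a) -> P 0 c = 2 -> a 0 c < z 0 c < b 0 c ->
  (2 %| z 0%R c - a 0%R c)%Z -> (2 %| b 0%R c - z 0%R c)%Z ->
  l1norm (a + P - z) + l1norm (b - P - z) < l1norm (a - z) + l1norm (b - z).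
Proof.
move=> P_sub Pc azb even_za even_bz.
rewrite /l1norm -!big_split /= [X in X < _](bigD1 c) // [X in _ < X](bigD1 c) //=.
apply: ltr_leD; first by rewrite !mxE Pc; exact: norm_exchange_lt.
by apply: ler_sum => i _; have [] := P_sub i; rewrite !mxE; exact: norm_exchange_le.
Qed.

Lemma big_flatten_nseq l (T : Type) (V : nmodType) (n : 'I_l -> nat) (zs : 'I_l -> T)
    (F : T -> V) :
  \sum_(y <- flatten [seq nseq (n k) (zs k) | k <- enum 'I_l]) F y = \sum_k F (zs k) *+ n k.
Proof.
rewrite big_flatten big_map big_enum /=.
by apply: eq_bigr => k _; rewrite big_nseq iter_addr_0.
Qed.

Lemma common_denominator l (q : 'I_l -> rat) : (forall k, 0 <= q k) ->
  exists (D : nat) (n : 'I_l -> nat), (0 < D)%N /\ forall k, (n k)%:R = q k * D%:R.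
Proof.
move=> q_ge0; pose Dk (k : 'I_l) := (\prod_(j | j != k) `|denq (q j)|)%N.
exists (\prod_j `|denq (q j)|)%N, (fun k => `|numq (q k)|%N * Dk k)%N; split.
  by apply: prodn_gt0 => j; rewrite absz_gt0 denq_neq0.
move=> k; rewrite (bigD1 k) //= !natrM -/(Dk k) mulrA; congr (_ * _).
by rewrite !natr_absz !ger0_norm ?numq_ge0 ?denq_ge0 // numqE.
Qed.

Section Jensen.

Variables (R : realType) (m : nat) (f : zvec m -> option rat) (r : zvec m).
Hypothesis f_SBO : SBO_jump_M_convex R f.

Definition feasible y := cong2 y r /\ exists a, f y = Some a.

Local Notation fval y := (ratr (odflt 0 (f y)) : R).

Lemma dispersion_descent (z : zvec m) (s : seq (zvec m)) : cong2 z r ->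
  (forall y, y \in s -> feasible y) -> \sum_(y <- s) y = z *+ size s ->
  has (fun y => y != z) s ->
  exists s', [/\ forall y, y \in s' -> feasible y, \sum_(y <- s') y = z *+ size s',
    size s' = size s, dispersion z s' < dispersion z s &
    \sum_(y <- s') fval y <= \sum_(y <- s) fval y].
Proof.
move=> zr s_feas sum_s /hasP[y ys yz].
have [c yzc] := row_neqP yz.
have sum_c := sum_coord c sum_s.
have has_c : has (fun y : zvec m => y 0 c != z 0 c) s by apply/hasP; exists y.
have /hasP[a a_s ac] := has_lt_mean sum_c has_c.
have /hasP[b b_s cb] := has_gt_mean sum_c has_c.
have [[ar [al fa]] [br [be fb]]] := (s_feas a a_s, s_feas b b_s).
have ba_even := cong2_sub_even ar br.
have bac_gt0 : 0 < (b - a) 0 c by rewrite !mxE subr_gt0; exact: lt_trans cb.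
have [P [al' [be' [[P_sub P_even] Pc faP fbP val_le]]]] :=
  SBO_even_exchange f_SBO fa fb ba_even bac_gt0.
have ab : a != b by apply: contraTneq ac => ->; rewrite -leNgt ltW.
have [rest perm_s] : exists rest, perm_eq s [:: a, b & rest].
  exists (rem b (rem a s)); apply: perm_trans (perm_to_rem a_s) _.
  rewrite perm_cons perm_to_rem //.
  by move: b_s; rewrite (perm_mem (perm_to_rem a_s)) inE eq_sym (negPf ab).
have rest_s y' : y' \in rest -> y' \in s by rewrite (perm_mem perm_s) !inE => ->; rewrite !orbT.
exists [:: a + P, b - P & rest]; split.
- move=> y'; rewrite !inE => /or3P[/eqP-> | /eqP-> | /rest_s/s_feas //].
    by split; [case: (cong2_addr_even ar P_even) | exists al'].
  by split; [case: (cong2_addr_even br P_even) | exists be'].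
- move: sum_s; rewrite (perm_big _ perm_s) (perm_size perm_s) !big_cons /= => <-.
  by rewrite -!addrA; congr (_ + _); rewrite addrCA addNKr.
- by rewrite (perm_size perm_s).
- rewrite /dispersion (perm_big _ perm_s) !big_cons /= !addrA ltrD2r.
  apply: (l1norm_exchange (c := c)) => //; first by apply/andP; split.
    by have := cong2_sub_even ar zr c; rewrite !mxE.
  by have := cong2_sub_even zr br c; rewrite !mxE.
rewrite (perm_big _ perm_s) !big_cons /= faP fbP fa fb /= !addrA lerD2r.
exact: val_le.
Qed.

Lemma jensen_feasible (z : zvec m) (s : seq (zvec m)) : cong2 z r -> s != [::] ->
  (forall y, y \in s -> feasible y) -> \sum_(y <- s) y = z *+ size s ->
  exists a, f z = Some a /\ (size s)%:R * ratr a <= \sum_(y <- s) fval y.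
Proof.
move=> zr; have [n] := ubnP `|dispersion z s|%N.
elim: n s => // n IH s lt_n s_ne s_feas sum_s.
have [ne_z | /hasPn eq_z] := boolP (has (fun y => y != z) s).
  have [s' [s'_feas sum_s' size_s' disp_lt val_le]] := dispersion_descent zr s_feas sum_s ne_z.
  have [||a [fz le_a]] := IH s' _ _ s'_feas sum_s'.
  - by have := dispersion_ge0 z s'; lia.
  - by rewrite -size_eq0 size_s' size_eq0.
  by exists a; split=> //; rewrite -size_s'; exact: le_trans le_a val_le.
have eq_z' y : y \in s -> y = z by move=> /eq_z; rewrite negbK => /eqP.
case: s s_ne s_feas eq_z' {lt_n sum_s eq_z} => // y0 s _ s_feas eq_z'.
have [_ [a fz]] := s_feas y0 (mem_head _ _); rewrite (eq_z' y0 (mem_head _ _)) in fz.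
exists a; split=> //; rewrite (eq_big_seq (fun _ => fval z)) => [|y /eq_z' -> //].
by rewrite sumr_const_seq fz mulr_natl.
Qed.

Lemma jensen_rational l (zs : 'I_l -> zvec m) (z : zvec m) (q : 'I_l -> rat) :
  barycentric zs z q -> cong2 z r -> (forall k, cong2 (zs k) r) ->
  (forall k, 0 < q k -> exists a, f (zs k) = Some a) ->
  exists a, f z = Some a /\ ratr a <= \sum_k ratr (q k) * fval (zs k).
Proof.
move=> [q_ge0 q_sum q_z] z_r zs_r q_fin.
have [D [n [D_gt0 nq]]] := common_denominator q_ge0.
pose s := flatten [seq nseq (n k) (zs k) | k <- enum 'I_l].
have size_s : size s = D.
  apply/eqP; rewrite -(eqr_nat rat) -sumr_const_seq big_flatten_nseq.
  under eq_bigr do rewrite nq; by rewrite -mulr_suml q_sum mul1r.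
have s_feas y : y \in s -> feasible y.
  move=> /flattenP[_ /mapP[k _ ->]]; rewrite mem_nseq => /andP[nk_gt0 /eqP->].
  split=> //; apply: q_fin; rewrite lt0r q_ge0 andbT.
  by apply: contraTneq nk_gt0 => qk0; rewrite -(ltr0n rat) nq qk0 mul0r ltxx.
have sum_s : \sum_(y <- s) y = z *+ size s.
  apply/rowP => i; rewrite summxE mulmxnE big_flatten_nseq; apply: (@intr_inj rat).
  rewrite rmorph_sum rmorphMn /= size_s -mulr_natl q_z mulr_sumr.
  by apply: eq_bigr => k _; rewrite rmorphMn -mulr_natl nq -mulrA mulrCA.
have s_ne : s != [::] by rewrite -size_eq0 size_s -lt0n.
have [a [fz le_a]] := jensen_feasible z_r s_ne s_feas sum_s.
have D_pos : (0 : R) < D%:R by rewrite ltr0n.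
exists a; split=> //; rewrite -(ler_pM2l D_pos).
rewrite size_s big_flatten_nseq in le_a; apply: (le_trans le_a).
rewrite mulr_sumr; apply: ler_sum => k _.
have := congr1 (@ratr R) (nq k); rewrite rmorphM !rmorph_nat => nqR.
by rewrite -[_ *+ n k]mulr_natl nqR -mulrA mulrCA.
Qed.

End Jensen.

Theorem lemma19 (R : realType) (m : nat) (f : 'rV[int]_m -> option rat)
    (r : 'rV[int]_m) (l : nat) (zs : 'I_l -> 'rV[int]_m) (lam : 'I_l -> R)
    (z : 'rV[int]_m) :
  SBO_jump_M_convex R f ->
  (forall k, cong2 (zs k) r) ->
  (forall k, 0 <= lam k) ->
  \sum_(k < l) lam k = 1 ->
  (forall i : 'I_m, (z 0 i)%:~R = \sum_(k < l) lam k * (zs k 0 i)%:~R) ->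
  cong2 z r ->
  (forall k, 0 < lam k -> exists a, f (zs k) = Some a) ->
  ext_le (f z) (\sum_(k < l) lam k * ratr (odflt 0 (f (zs k)))).
Proof.
move=> f_SBO zs_r lam_ge0 lam_sum lam_z z_r lam_fin.
have [q [q_bary q_supp q_cost]] :=
  rational_barycentric (fun k => odflt 0 (f (zs k))) (And3 lam_ge0 lam_sum lam_z).
have q_fin k : 0 < q k -> exists a, f (zs k) = Some a.
  move=> qk_gt0; apply: lam_fin; rewrite lt0r lam_ge0 andbT.
  by apply: contraTneq qk_gt0 => /q_supp ->; rewrite ltxx.
have [a [fz le_a]] := jensen_rational f_SBO q_bary z_r zs_r q_fin.
by rewrite fz; exact: le_trans le_a q_cost.
Qed.
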